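(* Consider a Fragile multi-CPR Game with $n\ge1$ players and $m\ge1$ CPRs satisfying the Assumption below, with constraint policies $\vartheta_i$ as below. Then there exists at most one Generalized Nash equilibrium $\mathbf{x}=(\mathbf{x}_1,\dots,\mathbf{x}_n)$ for which $\mathbf{x}_i$ is of Type I for all $i\in[n]$.
   Context: Let $[k]=\{1,\dots,k\}$, $C_m=\{(x_1,\dots,x_m)\in[0,1]^m:\sum_j x_j\le1\}$, $\mathcal{C}_n=\prod_{i\in[n]}C_m$, $\mathcal{C}_{-i}=\prod_{[n]\setminus\{i\}}C_m$. A profile is $\mathbf{x}=(\mathbf{x}_1,\dots,\mathbf{x}_n)\in\mathcal{C}_n$, $\mathbf{x}_i=(x_{i1},\dots,x_{im})$; write $\mathbf{x}=(\mathbf{x}_i,\mathbf{x}_{-i})$. Put $\mathbf{x}_T^{(j)}=\sum_i x_{ij}$, $\mathbf{x}_T^{j|i}=\sum_{\ell\ne i}x_{\ell j}$. Each CPR $j$ has a return rate $\mathcal{R}_j(t)>1$ and failure probability $p_j(t)\in[0,1]$; each player $i$ has parameters $a_i,k_i$. Effective rate: $\mathcal{F}_{ij}(t)=(\mathcal{R}_j(t)-1)^{a_i}(1-p_j(t))-k_ip_j(t)$; utility $\mathcal{V}_i(\mathbf{x}_i;\mathbf{x}_{-i})=\sum_j x_{ij}^{a_i}\mathcal{F}_{ij}(\mathbf{x}_T^{(j)})$. Assumption: (1) $p_j(0)=0$, $p_j(t)=1$ for $t\ge1$; (2) $a_i\in(0,1]$, $k_i>0$; (3) each $\mathcal{F}_{ij}$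 (continuous on $[0,1]$) has strictly negative first and second derivatives on $(0,1)$. Let $\omega_{ij}\in(0,1)$ be the unique zero of $\mathcal{F}_{ij}$ in $(0,1)$. Active CPRs: $A(\mathbf{x}_{-i})=\{j:\mathbf{x}_T^{j|i}<\omega_{ij}\}$. Constraint policy: $\vartheta_i(\mathbf{x}_{-i})=C_m\cap\big(\prod_{j\in A(\mathbf{x}_{-i})}[0,\omega_{ij}-\mathbf{x}_T^{j|i}]\times\prod_{j\notin A(\mathbf{x}_{-i})}\{0\}\big)$. A Generalized Nash equilibrium (GNE) is $\mathbf{x}\in\mathcal{C}_n$ with, for all $i$, $\mathbf{x}_i\in\vartheta_i(\mathbf{x}_{-i})$ and $\mathcal{V}_i(\mathbf{x}_i;\mathbf{x}_{-i})\ge\mathcal{V}_i(\mathbf{y};\mathbf{x}_{-i})$ for all $\mathbf{y}\in\vartheta_i(\mathbf{x}_{-i})$. Let $\psi_{ij}(x;s)=x\,\mathcal{F}_{ij}'(x+s)+a_i\mathcal{F}_{ij}(x+s)$. For a GNE $\mathbf{x}$ and $i\in[n]$, let $J_{\mathbf{x}_{-i}}=\{j\in A(\mathbf{x}_{-i}):x_{ij}\ne0\}$. Then $\mathbf{x}_i$ is of Type I if $\sum_{j\in J_{\mathbf{x}_{-i}}}x_{ij}<1$ and $\psi_{ij}(x_{ij};\mathbf{x}_T^{j|i})=0$ for all $j\in J_{\mathbf{x}_{-i}}$; it is of Type II if $\sum_{j\in J_{\mathbf{x}_{-i}}}x_{ij}=1$ and there is $\kappa_0\ge0$ with $x_{ij}^{a_i-1}\psi_{ij}(x_{ij};\mathbf{x}_T^{j|i})=\kappa_0$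 for all $j\in J_{\mathbf{x}_{-i}}$. *)

From Stdlib Require Import Reals Lra.
From Coquelicot Require Import Coquelicot.
Open Scope R_scope.

Fixpoint sumR (n : nat) (f : nat -> R) : R :=
  match n with O => 0 | S n' => sumR n' f + f n' end.

Definition rpow (x a : R) : R := if Rle_dec x 0 then 0 else Rpower x a.

Definition Feff (Rr p : nat -> R -> R) (a k : nat -> R) (i j : nat) (t : R) : R :=
  Rpower (Rr j t - 1) (a i) * (1 - p j t) - k i * p j t.

Definition psi (Rr p : nat -> R -> R) (a k : nat -> R) (i j : nat) (x s : R) : R :=
  x * Derive (Feff Rr p a k i j) (x + s) + a i * Feff Rr p a k i j (x + s).

Definition in_C (m : nat) (v : nat -> R) : Prop :=
  (forall j, (j < m)%nat -> 0 <= v j <= 1) /\ sumR m v <= 1.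

Definition in_Cn (n m : nat) (x : nat -> nat -> R) : Prop :=
  forall i, (i < n)%nat -> in_C m (x i).

Definition others (n : nat) (x : nat -> nat -> R) (i j : nat) : R :=
  sumR n (fun l => if Nat.eq_dec l i then 0 else x l j).

Definition active (n : nat) (omega : nat -> nat -> R) (x : nat -> nat -> R) (i j : nat) : Prop :=
  others n x i j < omega i j.

Definition vartheta (n m : nat) (omega : nat -> nat -> R) (x : nat -> nat -> R)
    (i : nat) (y : nat -> R) : Prop :=
  in_C m y /\
  forall j, (j < m)%nat ->
    (active n omega x i j -> 0 <= y j <= omega i j - others n x i j) /\
    (~ active n omega x i j -> y j = 0).

Definition utility (n m : nat) (Rr p : nat -> R -> R) (a k : nat -> R)
    (x : nat -> nat -> R) (i : nat) (y : nat -> R) : R :=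
  sumR m (fun j => rpow (y j) (a i) * Feff Rr p a k i j (y j + others n x i j)).

Definition is_GNE (n m : nat) (Rr p : nat -> R -> R) (a k : nat -> R)
    (omega : nat -> nat -> R) (x : nat -> nat -> R) : Prop :=
  in_Cn n m x /\
  forall i, (i < n)%nat ->
    vartheta n m omega x i (x i) /\
    forall y, vartheta n m omega x i y ->
      utility n m Rr p a k x i y <= utility n m Rr p a k x i (x i).

Definition typeI (n m : nat) (Rr p : nat -> R -> R) (a k : nat -> R)
    (omega : nat -> nat -> R) (x : nat -> nat -> R) (i : nat) : Prop :=
  sumR m (fun j => if Rlt_dec (others n x i j) (omega i j)
                   then (if Req_EM_T (x i j) 0 then 0 else x i j) else 0) < 1 /\
  forall j, (j < m)%nat -> active n omega x i j -> x i j <> 0 ->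
    psi Rr p a k i j (x i j) (others n x i j) = 0.

Definition game_assumption (n m : nat) (Rr p : nat -> R -> R) (a k : nat -> R)
    (omega : nat -> nat -> R) : Prop :=
  (forall j t, (j < m)%nat -> 0 <= t -> 1 < Rr j t) /\
  (forall j t, (j < m)%nat -> 0 <= t -> 0 <= p j t <= 1) /\
  (forall j, (j < m)%nat -> p j 0 = 0) /\
  (forall j t, (j < m)%nat -> 1 <= t -> p j t = 1) /\
  (forall i, (i < n)%nat -> 0 < a i <= 1 /\ 0 < k i) /\
  (forall i j, (i < n)%nat -> (j < m)%nat ->
     (forall t, 0 <= t <= 1 -> forall eps, 0 < eps -> exists delta, 0 < delta /\
        forall u, 0 <= u <= 1 -> Rabs (u - t) < delta ->
          Rabs (Feff Rr p a k i j u - Feff Rr p a k i j t) < eps) /\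
     (forall t, 0 < t < 1 ->
        ex_derive (Feff Rr p a k i j) t /\ Derive (Feff Rr p a k i j) t < 0 /\
        ex_derive (Derive (Feff Rr p a k i j)) t /\
        Derive (Derive (Feff Rr p a k i j)) t < 0)) /\
  (forall i j, (i < n)%nat -> (j < m)%nat ->
     0 < omega i j < 1 /\ Feff Rr p a k i j (omega i j) = 0).

From Stdlib Require Import Reals Lra Lia.
From Coquelicot Require Import Coquelicot.
Open Scope R_scope.

(* In a Type I equilibrium the stake x_ij depends only on the total load T_j
   on CPR j: if T_j < omega_ij, then x_ij <> 0 (with budget left over, entering
   an active CPR, where F_ij > 0, would pay) and the first-order condition
   psi_ij = 0 gives x_ij = a_i F_ij(T_j) / (- F_ij'(T_j)); otherwise x_ij = 0.
   Since F_ij and F_ij' are decreasing, these shares are nonincreasing in T_j,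
   so the fixed-point equation T_j = sum_i share_ij(T_j) has at most one
   positive solution.  Two such equilibria thus have the same loads, hence
   the same stakes. *)

Lemma sumR_ext n f g : (forall l, (l < n)%nat -> f l = g l) -> sumR n f = sumR n g.
Proof.
  induction n as [|n IH]; simpl; intros H; [reflexivity|].
  rewrite IH by (intros; apply H; lia). rewrite H by lia. reflexivity.
Qed.

Lemma sumR_le n f g : (forall l, (l < n)%nat -> f l <= g l) -> sumR n f <= sumR n g.
Proof.
  induction n as [|n IH]; simpl; intros H; [lra|].
  assert (sumR n f <= sumR n g) by (apply IH; intros; apply H; lia).
  assert (f n <= g n) by (apply H; lia). lra.
Qed.

Lemma sumR_ge0 n f : (forall l, (l < n)%nat -> 0 <= f l) -> 0 <= sumR n f.
Proof.
  induction n as [|n IH]; simpl; intros H; [lra|].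
  assert (0 <= sumR n f) by (apply IH; intros; apply H; lia).
  assert (0 <= f n) by (apply H; lia). lra.
Qed.

Lemma sumR_set n f j v : (j < n)%nat ->
  sumR n (fun l => if Nat.eq_dec l j then v else f l) = sumR n f - f j + v.
Proof.
  induction n as [|n IH]; simpl; intros Hj; [lia|].
  destruct (Nat.eq_dec n j) as [->|Hne].
  - rewrite (sumR_ext j _ f); [lra|].
    intros l Hl. destruct (Nat.eq_dec l j); [lia|reflexivity].
  - rewrite IH by lia. lra.
Qed.

Lemma sumR_antitone_fixpoint_unique n (h : nat -> R -> R) T1 T2 :
  (forall i u v, (i < n)%nat -> 0 < u -> u < v -> h i v <= h i u) ->
  0 < T1 -> 0 < T2 ->
  T1 = sumR n (fun i => h i T1) -> T2 = sumR n (fun i => h i T2) -> T1 = T2.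
Proof.
  intros Hh H1 H2 E1 E2.
  destruct (Rtotal_order T1 T2) as [Hlt|[Heq|Hgt]]; [exfalso| exact Heq |exfalso].
  - assert (sumR n (fun i => h i T2) <= sumR n (fun i => h i T1))
      by (apply sumR_le; intros; apply Hh; auto). lra.
  - assert (sumR n (fun i => h i T1) <= sumR n (fun i => h i T2))
      by (apply sumR_le; intros; apply Hh; auto). lra.
Qed.

Lemma Derive_lt0_decreasing (f : R -> R) lo hi :
  (forall t, lo < t < hi -> ex_derive f t /\ Derive f t < 0) ->
  forall u v, lo < u -> u < v -> v < hi -> f v < f u.
Proof.
  intros Hf u v Hu Huv Hv. apply Ropp_lt_cancel.
  apply (incr_function (fun t => - f t) lo hi (fun t => - Derive f t)); simpl; auto.
  - intros t Hlo Hhi. apply (is_derive_opp f). apply Derive_correct, Hf. lra.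
  - intros t Hlo Hhi. destruct (Hf t) as [_ Hneg]; lra.
Qed.

Definition total (n : nat) (x : nat -> nat -> R) (j : nat) : R :=
  sumR n (fun l => x l j).

Lemma others_total n x i j : (i < n)%nat -> others n x i j = total n x j - x i j.
Proof. intros Hi. unfold others, total. rewrite (sumR_set n (fun l => x l j) i 0 Hi). lra. Qed.

Lemma utility_enter n m Rr p a k x i j e : (j < m)%nat -> x i j = 0 ->
  utility n m Rr p a k x i (fun l => if Nat.eq_dec l j then e else x i l) =
  utility n m Rr p a k x i (x i) + rpow e (a i) * Feff Rr p a k i j (e + others n x i j).
Proof.
  intros Hj Hx0. unfold utility.
  set (f := fun l => rpow (x i l) (a i) * Feff Rr p a k i l (x i l + others n x i l)).
  rewrite (sumR_ext m _ (fun l => if Nat.eq_dec l j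
             then rpow e (a i) * Feff Rr p a k i j (e + others n x i j) else f l)).
  - rewrite (sumR_set m f j _ Hj).
    unfold f. rewrite Hx0. unfold rpow. destruct (Rle_dec 0 0); [ring | lra].
  - intros l Hl. unfold f. destruct (Nat.eq_dec l j) as [->|]; reflexivity.
Qed.

Lemma rpow_gt0 e a : 0 < e -> 0 < rpow e a.
Proof. intros He. unfold rpow. destruct (Rle_dec e 0); [lra | apply exp_pos]. Qed.

Section FragileGame.

Variables (n m : nat) (Rr p : nat -> R -> R) (a k : nat -> R) (omega : nat -> nat -> R).
Hypothesis Hgame : game_assumption n m Rr p a k omega.

Local Notation F := (Feff Rr p a k).

Lemma a_gt0 i : (i < n)%nat -> 0 < a i.
Proof. intros Hi. destruct Hgame as (_ & _ & _ & _ & Ha & _). apply Ha, Hi. Qed.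

Lemma omega_spec i j : (i < n)%nat -> (j < m)%nat ->
  0 < omega i j < 1 /\ F i j (omega i j) = 0.
Proof. intros Hi Hj. destruct Hgame as (_ & _ & _ & _ & _ & _ & Hom). auto. Qed.

Lemma Feff_derivatives i j t : (i < n)%nat -> (j < m)%nat -> 0 < t < 1 ->
  ex_derive (F i j) t /\ Derive (F i j) t < 0 /\
  ex_derive (Derive (F i j)) t /\ Derive (Derive (F i j)) t < 0.
Proof.
  intros Hi Hj Ht. destruct Hgame as (_ & _ & _ & _ & _ & HF & _).
  apply (HF i j Hi Hj), Ht.
Qed.

Lemma Derive_Feff_lt0 i j t : (i < n)%nat -> (j < m)%nat -> 0 < t < 1 ->
  Derive (F i j) t < 0.
Proof. intros Hi Hj Ht. apply (Feff_derivatives i j t Hi Hj Ht). Qed.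

Lemma Feff_decreasing i j u v : (i < n)%nat -> (j < m)%nat ->
  0 < u -> u < v -> v < 1 -> F i j v < F i j u.
Proof.
  intros Hi Hj. apply (Derive_lt0_decreasing _ 0 1).
  intros t Ht. destruct (Feff_derivatives i j t Hi Hj Ht) as (? & ? & _). auto.
Qed.

Lemma Derive_Feff_decreasing i j u v : (i < n)%nat -> (j < m)%nat ->
  0 < u -> u < v -> v < 1 -> Derive (F i j) v < Derive (F i j) u.
Proof.
  intros Hi Hj. apply (Derive_lt0_decreasing _ 0 1).
  intros t Ht. destruct (Feff_derivatives i j t Hi Hj Ht) as (_ & _ & ? & ?). auto.
Qed.

Lemma Feff_gt0 i j t : (i < n)%nat -> (j < m)%nat -> 0 < t < omega i j -> 0 < F i j t.
Proof.
  intros Hi Hj Ht. destruct (omega_spec i j Hi Hj) as [Hom HF0].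
  rewrite <- HF0. apply Feff_decreasing; auto; lra.
Qed.

Definition share (i j : nat) (T : R) : R :=
  if Rlt_dec T (omega i j) then a i * F i j T / - Derive (F i j) T else 0.

Lemma share_gt0 i j T : (i < n)%nat -> (j < m)%nat -> 0 < T < omega i j ->
  0 < share i j T.
Proof.
  intros Hi Hj HT. unfold share. destruct (Rlt_dec T (omega i j)); [|lra].
  destruct (omega_spec i j Hi Hj) as [Hom _].
  assert (0 < a i) by (apply a_gt0, Hi).
  assert (0 < F i j T) by (apply Feff_gt0; auto).
  assert (Derive (F i j) T < 0) by (apply Derive_Feff_lt0; auto; lra).
  apply Rdiv_lt_0_compat; [apply Rmult_lt_0_compat |]; lra.
Qed.

Lemma share_antitone i j u v : (i < n)%nat -> (j < m)%nat ->
  0 < u -> u < v -> share i j v <= share i j u.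
Proof.
  intros Hi Hj Hu Huv.
  destruct (Rlt_dec v (omega i j)) as [Hv|Hv].
  - destruct (omega_spec i j Hi Hj) as [Hom _].
    assert (0 < a i) by (apply a_gt0, Hi).
    assert (0 < F i j v) by (apply Feff_gt0; auto; lra).
    assert (F i j v < F i j u) by (apply Feff_decreasing; auto; lra).
    assert (Derive (F i j) v < Derive (F i j) u) by (apply Derive_Feff_decreasing; auto; lra).
    assert (Derive (F i j) u < 0) by (apply Derive_Feff_lt0; auto; lra).
    unfold share. destruct (Rlt_dec v (omega i j)); [|lra].
    destruct (Rlt_dec u (omega i j)); [|lra].
    unfold Rdiv. apply Rmult_le_compat.
    + apply Rmult_le_pos; lra.
    + left. apply Rinv_0_lt_compat. lra.
    + apply Rmult_le_compat_l; lra.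
    + apply Rinv_le_contravar; lra.
  - unfold share at 1. destruct (Rlt_dec v (omega i j)); [contradiction|].
    destruct (Rlt_dec u (omega i j)).
    + left. apply share_gt0; auto.
    + unfold share. destruct (Rlt_dec u (omega i j)); [contradiction | lra].
Qed.

Section TypeIEquilibrium.

Variable x : nat -> nat -> R.
Hypothesis Hx : is_GNE n m Rr p a k omega x.
Hypothesis HxI : forall i, (i < n)%nat -> typeI n m Rr p a k omega x i.

Lemma GNE_range i j : (i < n)%nat -> (j < m)%nat -> 0 <= x i j <= 1.
Proof. intros Hi Hj. destruct Hx as [HC _]. apply (HC i Hi), Hj. Qed.

Lemma others_ge0 i j : (i < n)%nat -> (j < m)%nat -> 0 <= others n x i j.
Proof.
  intros Hi Hj. apply sumR_ge0. intros l Hl.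
  destruct (Nat.eq_dec l i); [lra | apply GNE_range; auto].
Qed.

Lemma GNE_inactive_eq0 i j : (i < n)%nat -> (j < m)%nat ->
  ~ active n omega x i j -> x i j = 0.
Proof.
  intros Hi Hj Hna. destruct Hx as [_ Hg]. destruct (Hg i Hi) as [[_ Hv] _].
  apply (Hv j Hj), Hna.
Qed.

Lemma typeI_budget_lt1 i : (i < n)%nat -> sumR m (x i) < 1.
Proof.
  intros Hi. destruct (HxI i Hi) as [Hs _]. eapply Rle_lt_trans; [|exact Hs].
  right. apply sumR_ext. intros l Hl.
  destruct (Rlt_dec (others n x i l) (omega i l)) as [Hact|Hna].
  - destruct (Req_EM_T (x i l) 0); auto.
  - apply GNE_inactive_eq0; auto.
Qed.

Lemma total_ge i j : (i < n)%nat -> (j < m)%nat -> x i j <= total n x j.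
Proof.
  intros Hi Hj. assert (Hs : 0 <= others n x i j) by (apply others_ge0; auto).
  rewrite (others_total n x i j Hi) in Hs. lra.
Qed.

Lemma GNE_active_neq0 i j : (i < n)%nat -> (j < m)%nat ->
  active n omega x i j -> x i j <> 0.
Proof.
  intros Hi Hj Hact Hx0. unfold active in Hact.
  destruct (omega_spec i j Hi Hj) as [Hom _].
  set (s := others n x i j) in *.
  assert (Hs : 0 <= s) by (apply others_ge0; auto).
  set (S := sumR m (x i)).
  assert (HS : S < 1) by (apply typeI_budget_lt1, Hi).
  set (e := Rmin ((1 - S) / 2) ((omega i j - s) / 2)).
  assert (He1 : e <= (1 - S) / 2) by apply Rmin_l.
  assert (He2 : e <= (omega i j - s) / 2) by apply Rmin_r.
  assert (He0 : 0 < e) by (apply Rmin_pos; lra).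
  set (y := fun l => if Nat.eq_dec l j then e else x i l).
  destruct Hx as [_ Hg]. destruct (Hg i Hi) as [[HC Hv] Hopt].
  assert (Hy : vartheta n m omega x i y).
  { split; [split|].
    - intros l Hl. unfold y. destruct (Nat.eq_dec l j); [lra | apply HC, Hl].
    - unfold y. rewrite (sumR_set m (x i) j e Hj). fold S. lra.
    - intros l Hl. unfold y. destruct (Nat.eq_dec l j) as [->|]; [| apply Hv, Hl].
      split; [fold s; lra | contradiction]. }
  specialize (Hopt y Hy). unfold y in Hopt. rewrite (utility_enter n m Rr p a k x i j e Hj Hx0) in Hopt.
  assert (0 < rpow e (a i)) by (apply rpow_gt0, He0).
  assert (0 < F i j (e + s)) by (apply Feff_gt0; auto; lra).
  assert (0 < rpow e (a i) * F i j (e + s)) by (apply Rmult_lt_0_compat; auto).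
  fold s in Hopt. lra.
Qed.

Lemma typeI_first_order i j : (i < n)%nat -> (j < m)%nat ->
  active n omega x i j -> x i j <> 0 ->
  x i j * Derive (F i j) (total n x j) + a i * F i j (total n x j) = 0.
Proof.
  intros Hi Hj Hact Hx0. destruct (HxI i Hi) as [_ Hpsi].
  specialize (Hpsi j Hj Hact Hx0). unfold psi in Hpsi.
  rewrite (others_total n x i j Hi) in Hpsi.
  replace (x i j + (total n x j - x i j)) with (total n x j) in Hpsi by ring.
  exact Hpsi.
Qed.

Lemma GNE_share i j : (i < n)%nat -> (j < m)%nat -> x i j = share i j (total n x j).
Proof.
  intros Hi Hj.
  destruct (omega_spec i j Hi Hj) as [Hom HF0].
  assert (Hb := GNE_range i j Hi Hj).
  assert (Ho := others_total n x i j Hi).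
  set (T := total n x j) in *.
  unfold share. destruct (Rlt_dec T (omega i j)) as [HT|HT].
  - assert (Hact : active n omega x i j) by (unfold active; lra).
    assert (Hx0 := GNE_active_neq0 i j Hi Hj Hact).
    assert (HFOC := typeI_first_order i j Hi Hj Hact Hx0).
    assert (0 < x i j) by (destruct (proj1 Hb); [assumption | congruence]).
    assert (x i j <= T) by (apply total_ge; auto).
    assert (D : Derive (F i j) T < 0) by (apply Derive_Feff_lt0; auto; lra).
    apply Rmult_eq_reg_r with (- Derive (F i j) T); [| lra].
    unfold Rdiv. rewrite Rmult_assoc, Rinv_l by lra. fold T in HFOC. lra.
  - destruct (Rlt_dec (others n x i j) (omega i j)) as [Hact|Hna];
      [| apply GNE_inactive_eq0; auto].
    destruct (Req_EM_T (x i j) 0) as [|Hx0]; [assumption | exfalso].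
    destruct Hx as [_ Hg]. destruct (Hg i Hi) as [[_ Hv] _].
    destruct (proj1 (Hv j Hj) Hact) as [_ Hcap].
    assert (HTom : T = omega i j) by lra.
    assert (HFOC := typeI_first_order i j Hi Hj Hact Hx0). fold T in HFOC.
    rewrite HTom, HF0 in HFOC.
    assert (Derive (F i j) (omega i j) < 0) by (apply Derive_Feff_lt0; auto).
    assert (x i j * Derive (F i j) (omega i j) < 0) by (apply Rmult_pos_neg; lra).
    lra.
Qed.

Lemma total_gt0 j : (1 <= n)%nat -> (j < m)%nat -> 0 < total n x j.
Proof.
  intros Hn Hj. assert (H0 : (0 < n)%nat) by lia.
  destruct (omega_spec 0 j H0 Hj) as [Hom _].
  assert (Hle := total_ge 0 j H0 Hj).
  destruct (Rlt_dec (total n x j) (omega 0 j)) as [HT|HT]; [| lra].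
  assert (Hact : active n omega x 0 j).
  { unfold active. rewrite (others_total n x 0 j H0).
    destruct (GNE_range 0 j H0 Hj). lra. }
  assert (Hx0 := GNE_active_neq0 0 j H0 Hj Hact).
  destruct (GNE_range 0 j H0 Hj). lra.
Qed.

End TypeIEquilibrium.

End FragileGame.

Theorem theorem9 (n m : nat) (Rr p : nat -> R -> R) (a k : nat -> R)
    (omega : nat -> nat -> R) :
  (1 <= n)%nat -> (1 <= m)%nat ->
  game_assumption n m Rr p a k omega ->
  forall x y : nat -> nat -> R,
    is_GNE n m Rr p a k omega x ->
    (forall i, (i < n)%nat -> typeI n m Rr p a k omega x i) ->
    is_GNE n m Rr p a k omega y ->
    (forall i, (i < n)%nat -> typeI n m Rr p a k omega y i) ->
    forall i j, (i < n)%nat -> (j < m)%nat -> x i j = y i j.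
Proof.
  intros Hn _ Hgame x y Hx HxI Hy HyI i j Hi Hj.
  pose proof (GNE_share _ _ _ _ _ _ _ Hgame x Hx HxI) as Hsx.
  pose proof (GNE_share _ _ _ _ _ _ _ Hgame y Hy HyI) as Hsy.
  assert (Htotal : total n x j = total n y j).
  { apply (sumR_antitone_fixpoint_unique n (fun l => share Rr p a k omega l j)).
    - intros l u v Hl. apply (share_antitone _ _ _ _ _ _ _ Hgame); auto.
    - apply (total_gt0 _ _ _ _ _ _ _ Hgame x Hx HxI); auto.
    - apply (total_gt0 _ _ _ _ _ _ _ Hgame y Hy HyI); auto.
    - apply sumR_ext. intros l Hl. apply Hsx; auto.
    - apply sumR_ext. intros l Hl. apply Hsy; auto. }
  rewrite (Hsx i j Hi Hj), (Hsy i j Hi Hj), Htotal. reflexivity.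
Qed.
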